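(* Let $R$ be a local ring and $s\in R$ a central element with $s\in J(R)$. Let $A\in M_2(R;s)$ be such that neither $A$ nor $I_2-A$ is a unit of $M_2(R;s)$. Then $A$ is similar to $\left[\begin{smallmatrix} u&1\\ v&w\end{smallmatrix}\right]$ or to $\left[\begin{smallmatrix} w&1\\ v&u\end{smallmatrix}\right]$ for some $u\in 1+J(R)$, $v\in U(R)$, $w\in J(R)$.
   Context: All rings are associative with identity. A ring $R$ is local if $R/J(R)$ is a division ring, where $J(R)$ is the Jacobson radical; $U(R)$ is the group of units. For a ring $R$ and a central element $s\in R$, $M_2(R;s)$ denotes the ring whose elements are the $2\times 2$ arrays $\left[\begin{smallmatrix} a&b\\ c&d\end{smallmatrix}\right]$ with $a,b,c,d\in R$, with componentwise addition and multiplication $\left[\begin{smallmatrix} a&b\\ c&d\end{smallmatrix}\right]\left[\begin{smallmatrix} a'&b'\\ c'&d'\end{smallmatrix}\right]=\left[\begin{smallmatrix} aa'+s^2bc'&ab'+bd'\\ ca'+dc'&s^2cb'+dd'\end{smallmatrix}\right]$, with identity $I_2$. Two elements $A,B\in M_2(R;s)$ are similar if $B=P^{-1}AP$ for some unit $P$ of $M_2(R;s)$. *)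

From HB Require Import structures.
From mathcomp Require Import all_boot all_order all_algebra.
Set Implicit Arguments. Unset Strict Implicit. Unset Printing Implicit Defensive.
Import GRing.Theory.
Local Open Scope ring_scope.

Section Defs.
Variable R : pzRingType.

Definition is_unit (x : R) : Prop := exists y : R, x * y = 1 /\ y * x = 1.

(* Jacobson radical, element-wise definition (Lam, FC, Lemma 4.1):
   y \in J(R) iff 1 - x y is left-invertible for every x. *)
Definition jac (y : R) : Prop := forall x : R, exists z : R, z * (1 - x * y) = 1.

(* R is local : R/J(R) is a division ring, written out on representatives:
   the quotient is nonzero (1 \notin J) and every class outside J(R) is
   invertible modulo J(R). *)
Definition local_ring : Prop :=
  ~ jac 1 /\
  forall x : R, ~ jac x -> exists y : R, jac (x * y - 1) /\ jac (y * x - 1).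

Definition central (s : R) : Prop := forall x : R, s * x = x * s.

Record mat2 := M2 { m11 : R; m12 : R; m21 : R; m22 : R }.

Definition mat2_mul (s : R) (A B : mat2) : mat2 :=
  M2 (m11 A * m11 B + s ^+ 2 * m12 A * m21 B)
     (m11 A * m12 B + m12 A * m22 B)
     (m21 A * m11 B + m22 A * m21 B)
     (s ^+ 2 * m21 A * m12 B + m22 A * m22 B).

Definition mat2_one : mat2 := M2 1 0 0 1.

Definition mat2_sub (A B : mat2) : mat2 :=
  M2 (m11 A - m11 B) (m12 A - m12 B) (m21 A - m21 B) (m22 A - m22 B).

Definition mat2_unit (s : R) (A : mat2) : Prop :=
  exists B : mat2, mat2_mul s A B = mat2_one /\ mat2_mul s B A = mat2_one.

Definition mat2_similar (s : R) (A B : mat2) : Prop :=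
  exists P Q : mat2, mat2_mul s P Q = mat2_one /\ mat2_mul s Q P = mat2_one /\
    B = mat2_mul s (mat2_mul s Q A) P.

End Defs.

From mathcomp Require Import all_boot all_order all_algebra.
From Stdlib Require Import Classical.
Local Open Scope ring_scope.
Import GRing.Theory.

(* Over a local ring every element lies in J(R) or is a unit, and a matrix of
   M_2(R;s) with unit diagonal is a unit since its Schur complement differs
   from a unit by a multiple of s^2.  Hence if neither A nor I - A is a unit,
   the diagonal of A is congruent to (0,1) or to (1,0) modulo J(R); the second
   case is the first one for I - A.  For diagonal (0,1) mod J, shears whose
   correction terms are multiples of s^2 make both off-diagonal entries units
   without moving the diagonal modulo J, and a diagonal conjugation then scales
   the upper right entry to 1. *)

Section JacobsonRadical.
Context {R : pzRingType}.
Implicit Types x y : R.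

Lemma jac_mull x {y} : jac y -> jac (x * y).
Proof. by move=> Jy z; have [w hw] := Jy (z * x); exists w; rewrite mulrA. Qed.

Lemma jac_opp {y} : jac y -> jac (- y).
Proof. by move=> Jy z; have [w hw] := Jy (- z); exists w; rewrite mulrN -mulNr. Qed.

(* z (1 - y) = 1 gives z = 1 + z y, so z is also left invertible, which forces
   its left and right inverses to agree. *)
Lemma jac_unit_1sub {y} : jac y -> is_unit (1 - y).
Proof.
move=> Jy; have [z hz] := Jy 1; rewrite mul1r in hz.
have ez : 1 - (- z) * y = z.
  by rewrite mulNr opprK -{1}hz mulrBr mulr1 subrK.
have [w hw] := Jy (- z); rewrite ez in hw.
have ew : w = 1 - y by rewrite -[w]mulr1 -{1}hz mulrA hw mul1r.
by exists z; split; [rewrite -ew | ].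
Qed.

Lemma is_unit_mul {x y} : is_unit x -> is_unit y -> is_unit (x * y).
Proof.
move=> [x' [hx1 hx2]] [y' [hy1 hy2]]; exists (y' * x'); split.
  by rewrite mulrA -(mulrA x) hy1 mulr1 hx1.
by rewrite mulrA -(mulrA y') hx2 mulr1 hy2.
Qed.

Lemma is_unit1 : is_unit (1 : R).
Proof. by exists 1; rewrite mulr1. Qed.

Lemma jac_mulr x {y} : jac y -> jac (y * x).
Proof.
move=> Jy z.
have [T [_ hT]] := jac_unit_1sub (jac_mull (x * z) Jy).
exists (1 + z * y * T * x); rewrite mulrDl mul1r.
have -> : z * y * T * x * (1 - z * (y * x)) = z * y * (T * (1 - x * z * y)) * x.
  by rewrite !mulrBr !mulrBl !mulr1 !mulrA.
by rewrite hT mulr1 mulrA subrK.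
Qed.

Lemma jac_add {y1 y2} : jac y1 -> jac y2 -> jac (y1 + y2).
Proof.
move=> Jy1 Jy2 x.
have [U [e1 e2]] := jac_unit_1sub (jac_mull x Jy1).
have [w hw] := Jy2 (U * x).
exists (w * U).
have -> : 1 - x * (y1 + y2) = (1 - x * y1) * (1 - U * x * y2).
  by rewrite mulrBr mulr1 !mulrA e1 mul1r mulrDr opprD addrA.
by rewrite -mulrA (mulrA U) e2 mul1r.
Qed.

Lemma jac_sub {y1 y2} : jac y1 -> jac y2 -> jac (y1 - y2).
Proof. by move=> Jy1 Jy2; apply/jac_add/jac_opp. Qed.

Lemma is_unit_addJ {x y} : is_unit x -> jac y -> is_unit (x + y).
Proof.
move=> Ux Jy; have [x' [hx1 _]] := Ux.
have := is_unit_mul Ux (jac_unit_1sub (jac_opp (jac_mull x' Jy))).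
by rewrite opprK mulrDr mulr1 mulrA hx1 mul1r.
Qed.

Lemma jac_sub1_is_unit x : jac (x - 1) -> is_unit x.
Proof. by move=> J; rewrite -(subrK 1 x) addrC; apply: is_unit_addJ is_unit1 J. Qed.

Hypothesis R_local : local_ring R.

Lemma local_unit x : ~ jac x -> is_unit x.
Proof.
move=> nJx; have [y [Jxy Jyx]] := R_local.2 x nJx.
have [r [hr _]] := jac_unit_1sub (jac_opp Jxy); rewrite opprB subKr in hr.
have [l [_ hl]] := jac_unit_1sub (jac_opp Jyx); rewrite opprB subKr in hl.
have e : l * y = y * r.
  by rewrite -[l * y]mulr1 -hr !mulrA -(mulrA l) hl mul1r.
exists (y * r); split; first by rewrite mulrA.
by rewrite -e -mulrA.
Qed.

Lemma local_jac_or_unit x : jac x \/ is_unit x.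
Proof. by case: (classic (jac x)) => [|/local_unit]; [left | right]. Qed.

Lemma local_jac_1sub {x} : jac x -> ~ jac (1 - x).
Proof. by move=> Jx J1x; apply: R_local.1; rewrite -(subrK x 1); apply: jac_add. Qed.

End JacobsonRadical.

Section Mat2.
Context {R : pzRingType} {s : R}.
Hypothesis s_central : central s.
Implicit Types A B C P Q : mat2 R.

Local Notation mul := (mat2_mul s).
Local Notation I := (mat2_one R).

Lemma mat2_mulA A B C : mul (mul A B) C = mul A (mul B C).
Proof.
have : forall x, x * s ^+ 2 = s ^+ 2 * x.
  by move=> x; rewrite expr2 mulrA -s_central -mulrA -s_central mulrA.
case: A B C => [a b c d] [a' b' c' d'] [a'' b'' c'' d''].
rewrite /mat2_mul /=; move: (s ^+ 2) => t t_central.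
congr M2; rewrite !(mulrDl, mulrDr) !mulrA ?t_central -!addrA.
all: by congr (_ + _); apply: addrCA.
Qed.

Lemma mat2_mul1l A : mul I A = A.
Proof.
by case: A => a b c d; rewrite /mat2_mul /= !(mul1r, mul0r, mulr0, addr0, add0r).
Qed.

Lemma mat2_mul1r A : mul A I = A.
Proof. by case: A => a b c d; rewrite /mat2_mul /= !(mulr1, mulr0, addr0, add0r). Qed.

Lemma mat2_mulBl A B C : mul (mat2_sub A B) C = mat2_sub (mul A C) (mul B C).
Proof.
case: A B C => [a b c d] [a' b' c' d'] [a'' b'' c'' d''].
by rewrite /mat2_mul /mat2_sub /=; congr M2; rewrite ?mulrBr !mulrBl opprD addrACA.
Qed.

Lemma mat2_mulBr A B C : mul A (mat2_sub B C) = mat2_sub (mul A B) (mul A C).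
Proof.
case: A B C => [a b c d] [a' b' c' d'] [a'' b'' c'' d''].
by rewrite /mat2_mul /mat2_sub /=; congr M2; rewrite !mulrBr opprD addrACA.
Qed.

Lemma mat2_subKr A : mat2_sub I (mat2_sub I A) = A.
Proof. by case: A => a b c d; rewrite /mat2_sub /= !subKr. Qed.

Lemma mat2_unit_mul A B : mat2_unit s A -> mat2_unit s B -> mat2_unit s (mul A B).
Proof.
move=> [A' [h1 h2]] [B' [h3 h4]]; exists (mul B' A'); split.
  by rewrite mat2_mulA -(mat2_mulA B) h3 mat2_mul1l h1.
by rewrite mat2_mulA -(mat2_mulA A') h2 mat2_mul1l h4.
Qed.

Lemma mat2_similar_trans {A B C} :
  mat2_similar s A B -> mat2_similar s B C -> mat2_similar s A C.
Proof.
move=> [P1 [Q1 [h1 [h1' ->]]]] [P2 [Q2 [h2 [h2' ->]]]].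
exists (mul P1 P2), (mul Q2 Q1); split; last split.
- by rewrite mat2_mulA -(mat2_mulA P2) h2 mat2_mul1l h1.
- by rewrite mat2_mulA -(mat2_mulA Q1) h1' mat2_mul1l h2'.
- by rewrite !mat2_mulA.
Qed.

Lemma mat2_similar_1sub {A B} :
  mat2_similar s A B -> mat2_similar s (mat2_sub I A) (mat2_sub I B).
Proof.
move=> [P [Q [hPQ [hQP ->]]]]; exists P, Q; do 2!split => //.
by rewrite mat2_mulBr mat2_mulBl mat2_mul1r hQP.
Qed.

Lemma mat2_unit_diag a b c d :
  jac s -> is_unit a -> is_unit d -> mat2_unit s (M2 a b c d).
Proof.
move=> Js [a' [ha1 ha2]] Ud.
have [f' [hf1 hf2]] : is_unit (d - s ^+ 2 * c * a' * b).
  apply: (is_unit_addJ Ud (jac_opp _)).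
  by do 3!apply: jac_mulr; rewrite expr2; apply: jac_mulr.
have -> : M2 a b c d =
    mul (M2 a 0 c 1) (M2 1 (a' * b) 0 (d - s ^+ 2 * c * a' * b)).
  rewrite /mat2_mul /= !(mulr1, mulr0, mul0r, mul1r, addr0) mulrA ha1 mul1r.
  by rewrite !mulrA addrC subrK.
apply: mat2_unit_mul.
  exists (M2 a' 0 (- (c * a')) 1); rewrite /mat2_mul /mat2_one /=.
  rewrite !(mulr1, mulr0, mul0r, mul1r, addr0, add0r) ha1 ha2.
  by split; rewrite ?subrr // mulNr -mulrA ha2 mulr1 addNr.
exists (M2 1 (- (a' * b * f')) 0 f'); rewrite /mat2_mul /mat2_one /=.
rewrite !(mulr1, mulr0, mul0r, mul1r, addr0, add0r) hf1 hf2.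
by split; rewrite ?addNr // mulNr -mulrA hf2 mulr1 subrr.
Qed.

Lemma mat2_similar_refl A : mat2_similar s A A.
Proof. by exists I, I; rewrite !mat2_mul1r !mat2_mul1l. Qed.

Lemma mat2_similar_shear21 a b c d : mat2_similar s (M2 a b c d)
  (M2 (a + s ^+ 2 * b) b (c - a + (d - s ^+ 2 * b)) (d - s ^+ 2 * b)).
Proof.
exists (M2 1 0 1 1), (M2 1 0 (-1) 1); rewrite /mat2_mul /mat2_one /=.
rewrite !(mulr1, mulr0, mul0r, mul1r, addr0, add0r, mulN1r, mulNr, mulrN).
by rewrite subr0 subrr addNr [- a + _]addrC [- (_ * _) + _]addrC.
Qed.

Lemma mat2_similar_shear12 a b c d : mat2_similar s (M2 a b c d)
  (M2 (a + s ^+ 2 * c) (b + d - (a + s ^+ 2 * c)) c (d - s ^+ 2 * c)).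
Proof.
exists (M2 1 (-1) 0 1), (M2 1 1 0 1); rewrite /mat2_mul /mat2_one /=.
rewrite !(mulr1, mulr0, mul0r, mul1r, addr0, add0r, mulrN1, mulNr, mulrN).
by rewrite subrr addNr oppr0 add0r [- (_ + _) + _]addrC [- (_ * _) + _]addrC.
Qed.

Lemma mat2_similar_diag a b c d x y : x * y = 1 -> y * x = 1 ->
  mat2_similar s (M2 a b c d) (M2 a (b * y) (x * c) (x * d * y)).
Proof.
move=> hxy hyx; exists (M2 1 0 0 y), (M2 1 0 0 x); rewrite /mat2_mul /mat2_one /=.
by rewrite !(mulr1, mulr0, mul0r, mul1r, addr0, add0r) hxy hyx.
Qed.

Lemma mat2_similar_opp_offdiag a b c d :
  mat2_similar s (M2 a (- b) (- c) d) (M2 a b c d).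
Proof.
exists (M2 1 0 0 (-1)), (M2 1 0 0 (-1)); rewrite /mat2_mul /mat2_one /=.
rewrite !(mulr1, mulr0, mul0r, mul1r, addr0, add0r, mulrN1, mulN1r, mulrN, mulNr).
by rewrite !(oppr0, opprK, subr0, sub0r, addr0).
Qed.

End Mat2.

Section NormalForm.
Context {R : pzRingType} {s : R}.
Hypotheses (R_local : local_ring R) (s_central : central s) (Js : jac s).

Definition diag01modJ (A : mat2 R) : Prop := jac (m11 A) /\ jac (m22 A - 1).

Lemma jac_s2_mul x : jac (s ^+ 2 * x).
Proof. by apply: jac_mulr; rewrite expr2; apply: jac_mull. Qed.

(* If c is in J, the shear makes the lower left entry congruent to d - a = 1
   modulo J; symmetrically for b below. *)
Lemma diag01modJ_unit21 A : diag01modJ A ->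
  exists B, mat2_similar s A B /\ diag01modJ B /\ is_unit (m21 B).
Proof.
case: A => a b c d [/= Ja Jd].
case: (local_jac_or_unit R_local c) => [Jc | Uc]; last first.
  by exists (M2 a b c d); split; [apply: mat2_similar_refl | split].
eexists; split; first exact: mat2_similar_shear21.
split; first split => /=.
- exact: jac_add Ja (jac_s2_mul b).
- by rewrite addrAC; apply: jac_sub Jd (jac_s2_mul b).
- apply: jac_sub1_is_unit => /=.
  rewrite -addrA [d - _ - 1]addrAC.
  exact: jac_add (jac_sub Jc Ja) (jac_sub Jd (jac_s2_mul b)).
Qed.

Lemma diag01modJ_unit12 {A} : diag01modJ A -> is_unit (m21 A) ->
  exists B, mat2_similar s A B /\ diag01modJ B /\
    is_unit (m21 B) /\ is_unit (m12 B).
Proof.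
case: A => a b c d [/= Ja Jd] /= Uc.
case: (local_jac_or_unit R_local b) => [Jb | Ub]; last first.
  by exists (M2 a b c d); split; [apply: mat2_similar_refl | split].
eexists; split; first exact: mat2_similar_shear12.
split; first split => /=.
- exact: jac_add Ja (jac_s2_mul c).
- by rewrite addrAC; apply: jac_sub Jd (jac_s2_mul c).
split => //=; apply: jac_sub1_is_unit.
rewrite addrAC -[b + d - 1]addrA.
exact: jac_sub (jac_add Jb Jd) (jac_add Ja (jac_s2_mul c)).
Qed.

Lemma diag01modJ_normal {A} : diag01modJ A ->
  exists w v u, jac w /\ is_unit v /\ jac (u - 1) /\ mat2_similar s A (M2 w 1 v u).
Proof.
move=> /diag01modJ_unit21 [A1 [simA1 [DA1 Uc1]]].
have [A2 [simA2 [[Ja Jd] [Uc Ub]]]] := diag01modJ_unit12 DA1 Uc1.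
case: A2 simA2 Ja Jd Uc Ub => a b c d simA2 /= Ja Jd Uc [b' [hb1 hb2]].
exists a, (b * c), (b * d * b'); split => //; split.
  by apply: is_unit_mul Uc; exists b'.
split.
  have -> : b * d * b' - 1 = b * (d - 1) * b' by rewrite mulrBr mulrBl mulr1 hb1.
  exact/jac_mulr/jac_mull.
apply: (mat2_similar_trans s_central (mat2_similar_trans s_central simA1 simA2)).
by rewrite -[X in M2 a X (b * c)]hb1; apply: mat2_similar_diag.
Qed.

Lemma nonunit_diag_jac {A} : ~ mat2_unit s A -> jac (m11 A) \/ jac (m22 A).
Proof.
case: A => a b c d /= nA.
case: (local_jac_or_unit R_local a) => [|Ua]; first by left.
case: (local_jac_or_unit R_local d) => [|Ud]; first by right.
by case: nA; apply: mat2_unit_diag.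
Qed.

Lemma nonunit_1sub_diag01modJ {A} :
  ~ mat2_unit s A -> ~ mat2_unit s (mat2_sub (mat2_one R) A) ->
  diag01modJ A \/ diag01modJ (mat2_sub (mat2_one R) A).
Proof.
move=> /nonunit_diag_jac nA /nonunit_diag_jac.
case: A nA => a b c d /= [Ja|Jd] [J1a|J1d].
- by case: (local_jac_1sub R_local Ja J1a).
- by left; split => //; rewrite -opprB; apply: jac_opp.
- by right; split => //; rewrite addrAC subrr add0r; apply: jac_opp.
- by case: (local_jac_1sub R_local Jd J1d).
Qed.

End NormalForm.

Theorem lemma2p15 (R : pzRingType) (s : R) (A : mat2 R) :
  local_ring R -> central s -> jac s ->
  ~ mat2_unit s A -> ~ mat2_unit s (mat2_sub (mat2_one R) A) ->
  exists u v w : R,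
    jac (u - 1) /\ is_unit v /\ jac w /\
    (mat2_similar s A (M2 u 1 v w) \/ mat2_similar s A (M2 w 1 v u)).
Proof.
move=> R_local s_central Js nA nIA.
have [/(diag01modJ_normal R_local s_central Js) [w [v [u [Jw [Uv [Ju simA]]]]]] |] :=
  nonunit_1sub_diag01modJ R_local s_central Js nA nIA.
  by exists u, v, w; do 3!split => //; right.
(* A = I - (I - A) and the normal form of I - A is carried over. *)
move=> /(diag01modJ_normal R_local s_central Js) [w [v [u [Jw [Uv [Ju simIA]]]]]].
exists (1 - w), v, (1 - u); split; first by rewrite addrAC subrr add0r; apply: jac_opp.
split=> //; split; first by rewrite -opprB; apply: jac_opp.
left; have := mat2_similar_1sub simIA; rewrite mat2_subKr => simA.
apply: (mat2_similar_trans s_central simA).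
by rewrite /mat2_sub /= !sub0r; apply: mat2_similar_opp_offdiag.
Qed.
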